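(* Let $\mu_1\in\mathcal{M}_+(S^1)$ with $\mu_1\neq0$. Then the functional $\mathbb{S}_{\mu_1}:\mathcal{M}(S^1)\to[0,+\infty]$ defined by $\mathbb{S}_{\mu_1}(0)=0$ and \[ \mathbb{S}_{\mu_1}(\mu_0):=\frac{|\mu_0|(S^1)}{2}\,\mathcal{U}^2\Big(\frac{\mu_0}{|\mu_0|(S^1)},\frac{\mu_1}{|\mu_1|(S^1)}\Big)\quad(\mu_0\neq0) \] is convex and positively one-homogeneous.
   Context: $S^1$ is the unit circle in $\mathbb{C}$; $\mathcal{M}(S^1)$ is the space of finite signed Radon measures and $|\mu|$ the total variation measure. Wasserstein–Fisher–Rao distance: for $\mu_0,\mu_1\in\mathcal{M}(S^1)$, let $\Gamma(\mu_0,\mu_1)$ be the set of nonnegative Borel measures $\gamma$ on $\mathbb{C}\times\mathbb{C}$ with finite second moment such that $(\theta_i)_\#(r_i^2\gamma)=\mu_i$, $i=0,1$, with $r_i(x_0,x_1)=|x_i|$, $\theta_i(x_0,x_1)=x_i/|x_i|$ (a fixed arbitrary point of $S^1$ if $x_i=0$); $\mathcal{U}(\mu_0,\mu_1):=\inf_{\gamma\in\Gamma(\mu_0,\mu_1)}(\int|x-y|^2\,\mathrm{d}\gamma)^{1/2}$, and $\mathcal{U}=+\infty$ if $\Gamma$ is empty (in particular whenever one of the measures is not nonnegative). *)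

From HB Require Import structures.
From mathcomp Require Import all_boot all_order all_algebra.
From mathcomp Require Import all_classical all_reals all_analysis.
Set Implicit Arguments. Unset Strict Implicit. Unset Printing Implicit Defensive.
Import Order.TTheory GRing.Theory Num.Theory.
Import numFieldNormedType.Exports.
Local Open Scope classical_set_scope.
Local Open Scope ring_scope.

(* The complex plane C is modelled as R * R (its product sigma-algebra is the
   Borel sigma-algebra of R^2); C x C is (R * R) * (R * R). *)

Section WFR.
Variable R : realType.
Notation C := (R * R)%type.

Definition nrm2 (x : C) : R := x.1 ^+ 2 + x.2 ^+ 2.
Definition dist2 (x y : C) : R := (x.1 - y.1) ^+ 2 + (x.2 - y.2) ^+ 2.

Definition S1 : set C := [set x | nrm2 x = 1].

Definition theta (x : C) : C :=
  if x == (0, 0) then (1, 0)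
  else (x.1 / Num.sqrt (nrm2 x), x.2 / Num.sqrt (nrm2 x)).

(* a (signed) set function on C is concentrated on S^1 (element of M(S^1)) *)
Definition on_S1 (mu : set C -> \bar R) : Prop :=
  forall A, measurable A -> mu A = mu (A `&` S1).

Definition totvar (mu : set C -> \bar R) (D : set C) : \bar R :=
  ereal_sup [set s | exists (n : nat) (F : nat -> set C),
    [/\ forall i, measurable (F i), trivIset `I_n F,
        \bigcup_(i in `I_n) F i = D & s = (\sum_(i < n) `|mu (F i)|)%E]].

(* Gamma(mu0, mu1): nonnegative Borel measures gamma on C x C with finite
   second moment and (theta_i)_# (r_i^2 gamma) = mu_i, i = 0, 1 *)
Definition WFR_plan (mu0 mu1 : set C -> \bar R)
    (g : {measure set (C * C)%type -> \bar R}) : Prop :=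
  [/\ (\int[g]_z (nrm2 z.1 + nrm2 z.2)%:E < +oo)%E,
      (forall A : set C, measurable A ->
         (\int[g]_(z in (theta \o fst) @^-1` A) (nrm2 z.1)%:E)%E = mu0 A) &
      (forall A : set C, measurable A ->
         (\int[g]_(z in (theta \o snd) @^-1` A) (nrm2 z.2)%:E)%E = mu1 A)].

Definition WFR2 (mu0 mu1 : set C -> \bar R) : \bar R :=
  ereal_inf [set c | exists g : {measure set (C * C)%type -> \bar R},
    WFR_plan mu0 mu1 g /\ c = (\int[g]_z (dist2 z.1 z.2)%:E)%E].

(* normalization mu / |mu|(S^1) (|mu|(S^1) is finite for finite measures) *)
Definition normalize (mu : set C -> \bar R) : set C -> \bar R :=
  fun A => (mu A * ((fine (totvar mu S1))^-1)%:E)%E.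

Definition Sfun (mu1 mu0 : set C -> \bar R) : \bar R :=
  if `[< forall A, measurable A -> mu0 A = 0%E >] then 0%E
  else ((fine (totvar mu0 S1) / 2)%:E * WFR2 (normalize mu0) (normalize mu1))%E.

End WFR.

From HB Require Import structures.
From mathcomp Require Import all_boot all_order all_algebra.
From mathcomp Require Import all_classical all_reals all_analysis.
From mathcomp Require Import measurable_realfun.
From mathcomp Require Import ring lra.

Set Implicit Arguments.
Unset Strict Implicit.
Unset Printing Implicit Defensive.
Import Order.TTheory GRing.Theory Num.Theory.
Local Open Scope classical_set_scope.
Local Open Scope ring_scope.

(* Mixing two admissible plans for the normalized measures of mu and nu with
   the weights a = t M / P and b = (1 - t) N / P (M, N the masses of mu, nu and
   P = t M + (1 - t) N the mass of t mu + (1 - t) nu) gives an admissible plan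
   for the normalized combination, whose cost is the same mixture of costs.
   Hence U^2(., mu1) is convex along such combinations, and multiplying by P/2
   turns this into convexity of S.  Homogeneity holds because normalization is
   invariant under positive scaling while the mass scales.  A measure with a
   negative part admits no plan, so S is +oo there and convexity is trivial. *)

Local Open Scope ereal_scope.

Lemma ereal_inf_le_convex_comb (R : realType) (S T U : set (\bar R)) (a b : R) :
  (0 < a)%R -> (0 < b)%R -> (a + b = 1)%R ->
  (forall x, S x -> 0 <= x) -> (forall y, T y -> 0 <= y) ->
  (forall x y, S x -> T y -> ereal_inf U <= a%:E * x + b%:E * y) ->
  ereal_inf U <= a%:E * ereal_inf S + b%:E * ereal_inf T.
Proof.
move=> a0 b0 ab S0 T0 HU.
have iS0 : 0 <= ereal_inf S by apply/ereal_infP => x /S0.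
have iT0 : 0 <= ereal_inf T by apply/ereal_infP => y /T0.
have bT0 : 0 <= b%:E * ereal_inf T by rewrite mule_ge0 // lee_fin ltW.
case eS: (ereal_inf S) iS0 => [s| |] // _; last first.
  by rewrite mulry gtr0_sg // mul1e addye ?leey // gt_eqF // (lt_le_trans _ bT0).
case eT: (ereal_inf T) iT0 => [t| |] // _; last first.
  by rewrite mulry gtr0_sg // mul1e -EFinM addey ?leey.
apply/lee_addgt0Pr => e e0.
have [x Sx xlt] : exists2 x, S x & x < (s + e)%:E.
  by apply: ereal_inf_lt; rewrite eS lte_fin ltrDl.
have [y Ty ylt] : exists2 y, T y & y < (t + e)%:E.
  by apply: ereal_inf_lt; rewrite eT lte_fin ltrDl.
apply: (le_trans (HU _ _ Sx Ty)).
move: (S0 _ Sx) (T0 _ Ty) xlt ylt.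
case: x {Sx} => [x| |] //; case: y {Ty} => [y| |] //.
rewrite !lee_fin !lte_fin => x0 y0 xlt ylt.
have -> : e = (a * e + b * e)%R by rewrite -mulrDl ab mul1r.
nra.
Qed.

Lemma ge0_integral_measure_mix d (T : measurableType d) (R : realType)
    (a b : {nonneg R}) (g1 g2 : {measure set T -> \bar R}) (D : set T)
    (f : T -> \bar R) :
  measurable D -> measurable_fun setT f -> (forall z, 0 <= f z) ->
  \int[measure_add (mscale a g1) (mscale b g2)]_(z in D) f z =
  a%:num%:E * \int[g1]_(z in D) f z + b%:num%:E * \int[g2]_(z in D) f z.
Proof.
move=> mD mf f0; have mfD := measurable_funTS (D := D) mf.
by rewrite ge0_integral_measure_add // !ge0_integral_mscale.
Qed.

Lemma charge_partition_sum d (T : measurableType d) (R : realType)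
    (nu : {charge set T -> \bar R}) n (F : nat -> set T) :
  (forall i, measurable (F i)) -> trivIset `I_n F ->
  \sum_(i < n) nu (F i) = nu (\bigcup_(i in `I_n) F i).
Proof.
move=> mF tF; pose G k := if (k < n)%N then F k else set0.
have mG k : measurable (G k) by rewrite /G; case: ifP.
have tG : trivIset setT G.
  move=> i j _ _; rewrite /G.
  case: ifP => hi; case: ifP => hj; try by move=> [x []].
  exact: tF.
have UG : \bigcup_(i in `I_n) F i = \big[setU/set0]_(i < n) G i.
  rewrite -bigcup_mkord; apply: eq_bigcupr => i /= hi.
  by rewrite /G; move: hi => /= ->.
rewrite UG charge_semi_additive //; last by rewrite -UG; exact: bigcup_measurable.
by apply: eq_bigr => i _; rewrite /G ltn_ord.
Qed.

Section WFR_functional.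
Variable R : realType.
Local Notation C := (R * R)%type.

Lemma nrm2_ge0 (x : C) : (0 <= nrm2 x)%R.
Proof. by rewrite addr_ge0 // sqr_ge0. Qed.

Lemma dist2_ge0 (x y : C) : (0 <= dist2 x y)%R.
Proof. by rewrite addr_ge0 // sqr_ge0. Qed.

Lemma measurable_nrm2 : measurable_fun setT (@nrm2 R).
Proof.
by apply: measurable_funD; apply: measurable_funX;
  [exact: measurable_fst | exact: measurable_snd].
Qed.

Lemma thetaE : @theta R = fun x =>
  if ((x.1 == 0) && (x.2 == 0))%R then (1, 0)%R
  else (x.1 * nrm2 x `^ (- 2^-1), x.2 * nrm2 x `^ (- 2^-1))%R.
Proof.
apply/funext => -[a b]; rewrite /theta xpair_eqE /=; case: ifP => // _.
by rewrite powRN powR12_sqrt // nrm2_ge0.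
Qed.

Lemma measurable_theta : measurable_fun setT (@theta R).
Proof.
have mpow : measurable_fun setT (fun x : C => nrm2 x `^ (- 2^-1))%R.
  exact: measurableT_comp (measurable_powR _) measurable_nrm2.
rewrite thetaE; apply: measurable_fun_ifT.
- by apply: measurable_and; apply: measurable_fun_eqr.
- exact: measurable_cst.
- by apply: measurable_fun_pair; apply: measurable_funM.
Qed.

Lemma measurable_theta_preimage (p : C * C -> C) (A : set C) :
  measurable_fun setT p -> measurable A -> measurable ((@theta R \o p) @^-1` A).
Proof.
move=> mp mA; rewrite -[X in measurable X]setTI.
exact: (measurableT_comp measurable_theta mp) measurableT A mA.
Qed.

Lemma measurable_dist2 :
  measurable_fun setT (fun z : C * C => dist2 z.1 z.2).
Proof.
by apply: measurable_funD; apply: measurable_funX; apply: measurable_funB;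
  apply: measurableT_comp.
Qed.

Lemma WFR_plan_mix (p q r m : set C -> \bar R) (a b : {nonneg R})
    (g1 g2 : {measure set (C * C) -> \bar R}) :
  (a%:num + b%:num = 1)%R ->
  (forall A, measurable A -> r A = a%:num%:E * p A + b%:num%:E * q A) ->
  WFR_plan p m g1 -> WFR_plan q m g2 ->
  WFR_plan r m (measure_add (mscale a g1) (mscale b g2)).
Proof.
move=> ab1 hr [f1 p1 m1] [f2 q2 m2].
have mn1 : measurable_fun setT (fun z : C * C => (nrm2 z.1)%:E).
  by apply/measurable_EFinP; exact: measurableT_comp measurable_nrm2 _.
have mn2 : measurable_fun setT (fun z : C * C => (nrm2 z.2)%:E).
  by apply/measurable_EFinP; exact: measurableT_comp measurable_nrm2 _.
split.
- rewrite ge0_integral_measure_mix //.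
  + by apply: lte_add_pinfty; apply: lte_mul_pinfty.
  + by apply/measurable_EFinP; apply: measurable_funD; apply/measurable_EFinP.
  + by move=> z; rewrite lee_fin addr_ge0 ?nrm2_ge0.
- move=> A mA; rewrite ge0_integral_measure_mix ?p1 ?q2 ?hr //.
  + exact: measurable_theta_preimage measurable_fst mA.
  + by move=> z; rewrite lee_fin nrm2_ge0.
- move=> A mA; rewrite ge0_integral_measure_mix ?m1 ?m2 //.
  + by rewrite -ge0_muleDl // -EFinD ab1 mul1e.
  + exact: measurable_theta_preimage measurable_snd mA.
  + by move=> z; rewrite lee_fin nrm2_ge0.
Qed.

Lemma WFR2_ge0 (p m : set C -> \bar R) : 0 <= WFR2 p m.
Proof.
apply/ereal_infP => c [g [_ ->]]; apply: integral_ge0 => z _.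
by rewrite lee_fin dist2_ge0.
Qed.

Lemma WFR2_eq (p p' m : set C -> \bar R) :
  (forall A, measurable A -> p A = p' A) -> WFR2 p m = WFR2 p' m.
Proof.
move=> pp'; rewrite /WFR2; congr ereal_inf; apply/seteqP.
have plan_eq s s' g : (forall A, measurable A -> s A = s' A) ->
    WFR_plan s m g -> WFR_plan s' m g.
  by move=> ss' [g0 g1 g2]; split => // A mA; rewrite -ss' // g1.
by split => c [g [pg ->]]; exists g; split => //; apply: plan_eq pg => A mA;
  rewrite pp'.
Qed.

Lemma WFR2_pinfty (p m : set C -> \bar R) (A : set C) :
  measurable A -> p A < 0 -> WFR2 p m = +oo.
Proof.
move=> mA pA; apply/ereal_inf_pinfty => c [g [[_ gp _] _]].
move: pA; rewrite -gp // ltNge integral_ge0 // => z _.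
by rewrite lee_fin nrm2_ge0.
Qed.

Lemma WFR2_convexl (p q r m : set C -> \bar R) (a b : R) :
  (0 < a)%R -> (0 < b)%R -> (a + b = 1)%R ->
  (forall A, measurable A -> r A = a%:E * p A + b%:E * q A) ->
  WFR2 r m <= a%:E * WFR2 p m + b%:E * WFR2 q m.
Proof.
move=> a0 b0 ab1 hr.
have cost0 (s : set C -> \bar R) c :
    [set c | exists g, WFR_plan s m g /\ c = \int[g]_z (dist2 z.1 z.2)%:E] c ->
    0 <= c.
  by move=> [g [_ ->]]; apply: integral_ge0 => z _; rewrite lee_fin dist2_ge0.
apply: ereal_inf_le_convex_comb => //; first exact: cost0; first exact: cost0.
move=> _ _ [g1 [p1 ->]] [g2 [p2 ->]].
pose a' := NngNum (ltW a0); pose b' := NngNum (ltW b0).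
apply: ereal_inf_lbound; exists (measure_add (mscale a' g1) (mscale b' g2)).
split; first exact: (WFR_plan_mix (a := a') (b := b') ab1 hr p1 p2).
rewrite ge0_integral_measure_mix //; last by move=> z; rewrite lee_fin dist2_ge0.
by apply/measurable_EFinP; exact: measurable_dist2.
Qed.

Lemma measurable_S1 : measurable (@S1 R).
Proof.
rewrite -[X in measurable X]setTI.
exact: measurable_nrm2 measurableT [set 1%R] (measurable_set1 _).
Qed.

Lemma abs_setI_le_totvar (mu : set C -> \bar R) (A D : set C) :
  measurable A -> measurable D -> `|mu (A `&` D)| <= totvar mu D.
Proof.
move=> mA mD; apply: le_ereal_sup_tmp.
pose F k := if k == 0%N then A `&` D else if k == 1%N then D `\` A else set0.
exists (\sum_(i < 2) `|mu (F i)|); last first.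
  by rewrite big_ord_recl big_ord1 /F /=; apply: leeDl.
exists 2%N, F; split => //.
- move=> [|[|i]]; rewrite /F /=.
  + exact: measurableI.
  + exact: measurableD.
  + exact: measurable0.
- move=> [|[|i]] [|[|j]] //= _ _; rewrite /F /=; by move=> [x [[? ?] [? ?]]].
- apply/seteqP; split => [x [[|[|i]] //= _ []] // | x Dx].
  by have [Ax|nAx] := pselect (A x); [exists 0%N | exists 1%N].
Qed.

Lemma totvar_ge0 (mu : set C -> \bar R) (D : set C) :
  measurable D -> 0 <= totvar mu D.
Proof.
move=> mD; have := abs_setI_le_totvar mu measurableT mD.
exact/le_trans/abse_ge0.
Qed.

Lemma totvarZ (mu rho : set C -> \bar R) (lam : R) (D : set C) : (0 < lam)%R ->
  (forall A, measurable A -> rho A = lam%:E * mu A) ->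
  totvar rho D = lam%:E * totvar mu D.
Proof.
move=> lam0 hr.
have sumZ n (F : nat -> set C) : (forall i, measurable (F i)) ->
    \sum_(i < n) `|rho (F i)| = lam%:E * \sum_(i < n) `|mu (F i)|.
  move=> mF; rewrite ge0_sume_distrr //; apply: eq_bigr => i _.
  by rewrite hr // abseM gee0_abs // lee_fin ltW.
rewrite /totvar -ereal_sup_pZl //; congr ereal_sup; apply/seteqP; split.
- move=> _ [n [F [mF tF UF ->]]].
  by exists (\sum_(i < n) `|mu (F i)|); [exists n, F | rewrite sumZ].
- by move=> _ [_ [n [F [mF tF UF ->]]] <-]; exists n, F; rewrite sumZ.
Qed.

Lemma ge0_totvar (mu : {charge set C -> \bar R}) (D : set C) :
  measurable D -> (forall A, measurable A -> 0 <= mu A) -> totvar mu D = mu D.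
Proof.
move=> mD mu0; apply/le_anti/andP; split.
- apply/ereal_supP => _ [n [F [mF tF <- ->]]].
  rewrite -charge_partition_sum //.
  by apply: lee_sum => i _; rewrite gee0_abs ?mu0.
- by have := abs_setI_le_totvar mu mD mD; rewrite setIid gee0_abs ?mu0.
Qed.

Lemma totvar_fin_num (mu : {charge set C -> \bar R}) (D : set C) :
  measurable D -> totvar mu D \is a fin_num.
Proof.
move=> mD; have [P [N PN]] := Hahn_decomposition mu.
have /fin_numPlt/andP[_ cvD] : charge_variation PN D \is a fin_num.
  exact: fin_num_measure.
rewrite ge0_fin_numE ?totvar_ge0 //; apply: le_lt_trans cvD.
apply/ereal_supP => _ [n [F [mF tF <- ->]]].
rewrite -charge_partition_sum //; apply: lee_sum => i _.
exact: abse_charge_variation.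
Qed.

Lemma totvar_S1_gt0 (mu : {charge set C -> \bar R}) :
  on_S1 mu -> ~ (forall A, measurable A -> mu A = 0) ->
  (0 < fine (totvar mu (@S1 R)))%R.
Proof.
move=> oS /existsNP[A /not_implyP[mA /eqP muA]].
have := abs_setI_le_totvar mu mA measurable_S1; rewrite -oS //.
have /fin_numPlt/andP[_ tv_fin] := totvar_fin_num mu measurable_S1.
move=> muA_le; apply: fine_gt0; rewrite tv_fin andbT.
by apply: lt_le_trans muA_le; rewrite lt_neqAle abse_ge0 andbT eq_sym abse_eq0.
Qed.

Lemma Sfun_ge0 (m1 mu : set C -> \bar R) : 0 <= Sfun m1 mu.
Proof.
rewrite /Sfun; case: ifP => // _; rewrite mule_ge0 ?WFR2_ge0 // lee_fin.
by rewrite divr_ge0 // fine_ge0 // totvar_ge0 //; exact: measurable_S1.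
Qed.

Lemma SfunZ (m1 mu rho : set C -> \bar R) (lam : R) : (0 < lam)%R ->
  (forall A, measurable A -> rho A = lam%:E * mu A) ->
  Sfun m1 rho = lam%:E * Sfun m1 mu.
Proof.
move=> lam0 hr.
have null_eq : `[< forall A, measurable A -> rho A = 0 >] =
               `[< forall A, measurable A -> mu A = 0 >].
  apply/asbool_equiv_eq; split => null A mA; last by rewrite hr // null // mule0.
  move: (null A mA); rewrite hr // => /eqP.
  by rewrite mule_eq0 eqe gt_eqF // => /eqP.
have mass : fine (totvar rho (@S1 R)) = (lam * fine (totvar mu (@S1 R)))%R.
  rewrite (totvarZ _ lam0 hr); case: (totvar mu _) => [r| |] //=.
  - by rewrite mulry gtr0_sg // mul1e mulr0.
  - by rewrite mulrNy gtr0_sg // mul1e mulr0.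
rewrite /Sfun null_eq; case: ifP => _; first by rewrite mule0.
rewrite (@WFR2_eq (normalize rho) (normalize mu)) => [|A mA].
  by rewrite mass muleA -EFinM mulrA.
rewrite /normalize mass hr // invfM (muleC lam%:E) -muleA -EFinM.
by rewrite mulrA mulfV ?gt_eqF // mul1r.
Qed.

Lemma Sfun_neq_pinfty_ge0 (m1 : set C -> \bar R) (mu : {charge set C -> \bar R}) :
  on_S1 mu -> Sfun m1 mu != +oo -> forall A, measurable A -> 0 <= mu A.
Proof.
move=> oS Sfin A mA; rewrite leNgt; apply/negP => muA_lt0.
have nnull : ~ (forall B, measurable B -> mu B = 0).
  by move=> null; move: muA_lt0; rewrite null // ltxx.
have M_gt0 := totvar_S1_gt0 oS nnull.
have /fineK muA_fin : mu A \is a fin_num by exact: fin_num_measure.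
have : WFR2 (normalize mu) (normalize m1) = +oo.
  apply: (WFR2_pinfty _ mA); rewrite /normalize -muA_fin -EFinM lte_fin.
  by rewrite pmulr_llt0 ?invr_gt0 // -lte_fin muA_fin.
move: Sfin; rewrite /Sfun asboolF // => /[swap] ->.
by rewrite mulry gtr0_sg ?mul1e // divr_gt0.
Qed.

Lemma ge0_Sfun (m1 : set C -> \bar R) (mu : {charge set C -> \bar R}) :
  ~ (forall A, measurable A -> mu A = 0) ->
  (forall A, measurable A -> 0 <= mu A) ->
  Sfun m1 mu = (fine (mu (@S1 R)) / 2)%:E *
    WFR2 (fun A => mu A * (fine (mu (@S1 R)))^-1%:E) (normalize m1).
Proof.
move=> nnull mu0.
by rewrite /Sfun asboolF // /normalize (ge0_totvar measurable_S1 mu0).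
Qed.

Lemma ge0_charge_S1_gt0 (mu : {charge set C -> \bar R}) :
  on_S1 mu -> ~ (forall A, measurable A -> mu A = 0) ->
  (forall A, measurable A -> 0 <= mu A) -> (0 < fine (mu (@S1 R)))%R.
Proof.
by move=> oS nnull mu0; rewrite -(ge0_totvar measurable_S1 mu0) totvar_S1_gt0.
Qed.

Lemma WFR2_perspective_convex (p q : {charge set C -> \bar R})
    (r m : set C -> \bar R) (M N t : R) :
  (0 < M)%R -> (0 < N)%R -> (0 < t < 1)%R ->
  (forall A, measurable A -> r A = t%:E * p A + (1 - t)%:E * q A) ->
  ((t * M + (1 - t) * N) / 2)%:E *
    WFR2 (fun A => r A * (t * M + (1 - t) * N)^-1%:E) m <=
  t%:E * ((M / 2)%:E * WFR2 (fun A => p A * M^-1%:E) m) +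
  (1 - t)%:E * ((N / 2)%:E * WFR2 (fun A => q A * N^-1%:E) m).
Proof.
move=> M_gt0 N_gt0 /andP[t0 t1] hr; set P := (t * M + (1 - t) * N)%R.
have P_gt0 : (0 < P)%R by rewrite addr_gt0 // mulr_gt0 // subr_gt0.
pose a := (t * M / P)%R; pose b := ((1 - t) * N / P)%R.
have a_gt0 : (0 < a)%R by rewrite divr_gt0 // mulr_gt0.
have b_gt0 : (0 < b)%R by rewrite divr_gt0 // mulr_gt0 // subr_gt0.
have ab1 : (a + b = 1)%R by rewrite -mulrDl mulfV // gt_eqF.
have r_comb A : measurable A ->
    r A * P^-1%:E = a%:E * (p A * M^-1%:E) + b%:E * (q A * N^-1%:E).
  move=> mA; rewrite hr // -(fineK (fin_num_measure p _ mA)).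
  rewrite -(fineK (fin_num_measure q _ mA)) -!EFinM -!EFinD; congr EFin.
  by rewrite /a /b; field; rewrite !gt_eqF.
have P2_ge0 : 0 <= (P / 2)%:E by rewrite lee_fin divr_ge0 // ltW.
have a_ge0 : 0 <= a%:E by rewrite lee_fin ltW.
have b_ge0 : 0 <= b%:E by rewrite lee_fin ltW.
have := lee_wpmul2l P2_ge0 (WFR2_convexl m a_gt0 b_gt0 ab1 r_comb).
rewrite ge0_muleDr ?mule_ge0 ?WFR2_ge0 // !muleA -!EFinM.
have -> : (P / 2 * a = t * (M / 2))%R by rewrite /a; field; rewrite gt_eqF.
suff -> : (P / 2 * b = (1 - t) * (N / 2))%R by [].
by rewrite /b; field; rewrite gt_eqF.
Qed.

Lemma Sfun_convex_ge0 (m1 : set C -> \bar R)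
    (mu nu rho : {charge set C -> \bar R}) (t : R) :
  (0 < t < 1)%R -> on_S1 mu -> on_S1 nu ->
  ~ (forall A, measurable A -> mu A = 0) ->
  ~ (forall A, measurable A -> nu A = 0) ->
  (forall A, measurable A -> 0 <= mu A) ->
  (forall A, measurable A -> 0 <= nu A) ->
  (forall A, measurable A -> rho A = t%:E * mu A + (1 - t)%:E * nu A) ->
  Sfun m1 rho <= t%:E * Sfun m1 mu + (1 - t)%:E * Sfun m1 nu.
Proof.
move=> t01 oSm oSn mu_nnull nu_nnull mu0 nu0 hr.
have /andP[t_gt0 t_lt1] := t01; have mS1 := measurable_S1.
have M_gt0 := ge0_charge_S1_gt0 oSm mu_nnull mu0.
have N_gt0 := ge0_charge_S1_gt0 oSn nu_nnull nu0.
have rho0 A : measurable A -> 0 <= rho A.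
  move=> mA; have t_ge0 : (0 <= t)%R := ltW t_gt0.
  have t'_ge0 : (0 <= 1 - t)%R by rewrite subr_ge0 ltW.
  by rewrite hr // adde_ge0 // mule_ge0 ?mu0 ?nu0 ?lee_fin.
have rho_mass : fine (rho (@S1 R)) =
    (t * fine (mu (@S1 R)) + (1 - t) * fine (nu (@S1 R)))%R.
  by rewrite hr // -(fineK (fin_num_measure mu _ mS1))
    -(fineK (fin_num_measure nu _ mS1)) -!EFinM -EFinD.
have rho_nnull : ~ (forall A, measurable A -> rho A = 0).
  move=> null; move: rho_mass; rewrite null //= => /eqP; rewrite eq_sym.
  by rewrite gt_eqF // addr_gt0 // mulr_gt0 // subr_gt0.
by rewrite !ge0_Sfun // rho_mass; exact: WFR2_perspective_convex.
Qed.

Lemma Sfun_convex_null (m1 mu nu rho : set C -> \bar R) (t : R) :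
  (0 <= t < 1)%R -> (forall A, measurable A -> t%:E * mu A = 0) ->
  (forall A, measurable A -> rho A = t%:E * mu A + (1 - t)%:E * nu A) ->
  Sfun m1 rho <= t%:E * Sfun m1 mu + (1 - t)%:E * Sfun m1 nu.
Proof.
move=> /andP[t0 t1] null hr.
rewrite (@SfunZ m1 nu rho (1 - t)) ?subr_gt0 //; last first.
  by move=> A mA; rewrite hr // null // add0e.
by rewrite leeDr // mule_ge0 ?Sfun_ge0 // lee_fin.
Qed.

Lemma Sfun_convex (m1 : set C -> \bar R) (mu nu rho : {charge set C -> \bar R})
    (t : R) :
  (0 <= t <= 1)%R -> on_S1 mu -> on_S1 nu ->
  (forall A, measurable A -> rho A = t%:E * mu A + (1 - t)%:E * nu A) ->
  Sfun m1 rho <= t%:E * Sfun m1 mu + (1 - t)%:E * Sfun m1 nu.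
Proof.
move=> /andP[t0 t1] oSm oSn hr.
have [[t_lt1 nullL]|notL] :=
  pselect ((t < 1)%R /\ forall A, measurable A -> t%:E * mu A = 0).
  by apply: (Sfun_convex_null m1 _ nullL hr); rewrite t0.
have [[t_gt0 nullR]|notR] :=
  pselect ((0 < t)%R /\ forall A, measurable A -> (1 - t)%:E * nu A = 0).
  (* the statement is invariant under (mu, nu, t) |-> (nu, mu, 1 - t) *)
  rewrite addeC -[in t%:E](subKr 1 t); apply: (Sfun_convex_null m1).
  - by rewrite subr_ge0 t1 ltrBlDl ltrDr.
  - exact: nullR.
  - by move=> A mA; rewrite subKr addeC hr.
have t_gt0 : (0 < t)%R.
  rewrite lt_neqAle t0 andbT; apply/eqP => t_eq0; apply: notL.
  by split=> [|A _]; rewrite -t_eq0 ?mul0e.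
have t_lt1 : (t < 1)%R.
  rewrite lt_neqAle t1 andbT; apply/eqP => t_eq1; apply: notR.
  by split=> // A _; rewrite t_eq1 subrr mul0e.
have mu_nnull : ~ (forall A, measurable A -> mu A = 0).
  by move=> null; apply: notL; split=> // A mA; rewrite null // mule0.
have nu_nnull : ~ (forall A, measurable A -> nu A = 0).
  by move=> null; apply: notR; split=> // A mA; rewrite null // mule0.
have comb_ge0 s x : (0 <= s)%R -> 0 <= s%:E * Sfun m1 x.
  by move=> s0; rewrite mule_ge0 ?Sfun_ge0 // lee_fin.
have [Smu|Smu] := eqVneq (Sfun m1 mu) +oo.
  rewrite Smu mulry gtr0_sg // mul1e addye ?leey //.
  by rewrite gt_eqF // (lt_le_trans _ (comb_ge0 _ _ (ltW _))) // subr_gt0.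
have [Snu|Snu] := eqVneq (Sfun m1 nu) +oo.
  rewrite Snu mulry gtr0_sg ?subr_gt0 // mul1e addey ?leey //.
  by rewrite gt_eqF // (lt_le_trans _ (comb_ge0 _ _ (ltW t_gt0))).
apply: Sfun_convex_ge0 => //; first by rewrite t_gt0.
- exact: Sfun_neq_pinfty_ge0 oSm Smu.
- exact: Sfun_neq_pinfty_ge0 oSn Snu.
Qed.

End WFR_functional.

Local Close Scope ereal_scope.

Theorem proposition4p6 (R : realType)
  (mu1 : {charge set (R * R)%type -> \bar R}) :
  on_S1 mu1 ->
  (forall A, measurable A -> (0 <= mu1 A)%E) ->
  (exists A, measurable A /\ mu1 A <> 0%E) ->
  (* convexity *)
  (forall (mu nu rho : {charge set (R * R)%type -> \bar R}) (t : R),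
     0 <= t <= 1 -> on_S1 mu -> on_S1 nu -> on_S1 rho ->
     (forall A, measurable A -> rho A = (t%:E * mu A + (1 - t)%:E * nu A)%E) ->
     (Sfun mu1 rho <= t%:E * Sfun mu1 mu + (1 - t)%:E * Sfun mu1 nu)%E)
  /\
  (* positive one-homogeneity *)
  (forall (mu rho : {charge set (R * R)%type -> \bar R}) (lam : R),
     0 < lam -> on_S1 mu -> on_S1 rho ->
     (forall A, measurable A -> rho A = (lam%:E * mu A)%E) ->
     Sfun mu1 rho = (lam%:E * Sfun mu1 mu)%E).
Proof.
move=> _ _ _; split.
- by move=> mu nu rho t t01 oSm oSn _; exact: Sfun_convex.
- by move=> mu rho lam lam0 _ _; exact: SfunZ.
Qed.
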